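(* Let $\mathcal{X}\subseteq\mathcal{P}(\mathbb{N})$ be closed under enumeration equivalence and let $f\colon\mathcal{X}\to\mathcal{P}(\mathbb{N})$ be uniformly $e$-invariant. For any $A,B\in\mathcal{X}$ with $f(A)\neq f(B)$, we have $f(A\oplus\varnothing)\neq f(B\oplus\varnothing)$ and $f(\varnothing\oplus A)\neq f(\varnothing\oplus B)$.
   Context: $X\oplus Y=\{2n:n\in X\}\cup\{2n+1:n\in Y\}$ (note $A\oplus\varnothing\equiv_e A\equiv_e\varnothing\oplus A$, so these sets lie in $\mathcal{X}$). Enumeration reducibility: for $A,B\subseteq\mathbb{N}$, $A\le_e B$ if $A=\Gamma(B):=\{n:\exists D\subseteq B,\ \langle n,D\rangle\in\Gamma\}$ for some c.e. set $\Gamma$ of pairs $\langle n,D\rangle$ with $D$ finite (canonical index); $(\Gamma_i)_{i\in\mathbb{N}}$ is the standard computable numbering of these enumeration operators. $A\equiv_e B$ iff $A\le_e B\le_e A$. Let $\mathcal{X}\subseteq\mathcal{P}(\mathbb{N})$ be closed under $\equiv_e$. A function $f\colon\mathcal{X}\to\mathcal{P}(\mathbb{N})$ is $e$-invariant if $A\equiv_e B$ implies $f(A)\equiv_e f(B)$. Write $A\equiv_e B$ via $\langle i,j\rangle$ if $\Gamma_i(A)=B$ and $\Gamma_j(B)=A$ (with $\langle\cdot,\cdot\rangle$ a fixed computable pairing bijection). A function $u\colon\mathbb{N}\to\mathbb{N}$ is a uniformity function for $f$ if for all $A,B\in\mathcal{X}$ and all $i,j$, whenever $A\equiv_e B$ via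 $\langle i,j\rangle$ then $f(A)\equiv_e f(B)$ via $u(\langle i,j\rangle)$. $f$ is uniformly $e$-invariant if it has some uniformity function. *)

From mathcomp Require Import all_boot.
Set Implicit Arguments.
Unset Strict Implicit.
Unset Printing Implicit Defensive.

Definition natset := nat -> Prop.
Definition seteq (A B : natset) : Prop := forall n, A n <-> B n.
Definition emptyset : natset := fun _ => False.
(* X (+) Y = {2n : n in X} u {2n+1 : n in Y} *)
Definition oplus (A B : natset) : natset :=
  fun n => if odd n then B n./2 else A n./2.

Definition cpair (x y : nat) : nat := (x + y) * (x + y).+1 %/ 2 + y.
(* the finite set with canonical index k: D_k = {x | bit x of k is 1} *)
Definition canon (k : nat) : natset := fun x => odd (k %/ 2 ^ x).

Inductive prf : Type :=
| PZero
| PSucc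
| PProj (i : nat)
| PComp (f : prf) (gs : list prf)
| PRec (f g : prf)
| PMu (f : prf).

(* big-step semantics on argument lists (arities unchecked; missing
   arguments read as 0) *)
Inductive eval : prf -> seq nat -> nat -> Prop :=
| ev_zero args : eval PZero args 0
| ev_succ args : eval PSucc args (head 0 args).+1
| ev_proj i args : eval (PProj i) args (nth 0 args i)
| ev_comp f gs args ys v :
    evals gs args ys -> eval f ys v -> eval (PComp f gs) args v
| ev_rec0 f g rest v : eval f rest v -> eval (PRec f g) (0 :: rest) v
| ev_recS f g x rest a v :
    eval (PRec f g) (x :: rest) a -> eval g (x :: a :: rest) v ->
    eval (PRec f g) (x.+1 :: rest) v
| ev_mu f args n :
    eval f (n :: args) 0 ->
    (forall m, m < n -> exists w, eval f (m :: args) w.+1) ->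
    eval (PMu f) args n
with evals : list prf -> seq nat -> seq nat -> Prop :=
| evs_nil args : evals nil args [::]
| evs_cons g gs args y ys :
    eval g args y -> evals gs args ys -> evals (g :: gs) args (y :: ys).

Definition ce (S : natset) : Prop :=
  exists p : prf, forall n, S n <-> exists v, eval p [:: n] v.

(* Gamma is a numbering of exactly the c.e. sets (the standard numbering of
   enumeration operators is one such numbering) *)
Definition ce_numbering (Gamma : nat -> natset) : Prop :=
  (forall i, ce (Gamma i)) /\
  (forall S, ce S -> exists i, seteq (Gamma i) S).

(* Gamma(A) = {n | exists D finite, D subset A, <n, D> in Gamma} *)
Definition enum_op (G : natset) (A : natset) : natset :=
  fun n => exists k, G (cpair n k) /\ forall x, canon k x -> A x.

Definition e_le (Gamma : nat -> natset) (A B : natset) : Prop :=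
  exists i, seteq (enum_op (Gamma i) B) A.
Definition e_equiv (Gamma : nat -> natset) (A B : natset) : Prop :=
  e_le Gamma A B /\ e_le Gamma B A.
Definition e_equiv_via (Gamma : nat -> natset) (A B : natset) (i j : nat) : Prop :=
  seteq (enum_op (Gamma i) A) B /\ seteq (enum_op (Gamma j) B) A.

Definition closed_e (Gamma : nat -> natset) (X : natset -> Prop) : Prop :=
  forall A B, X A -> e_equiv Gamma A B -> X B.

Definition e_invariant (Gamma : nat -> natset) (X : natset -> Prop)
  (f : natset -> natset) : Prop :=
  forall A B, X A -> X B -> e_equiv Gamma A B -> e_equiv Gamma (f A) (f B).

Definition uniformity_function (Gamma : nat -> natset) (X : natset -> Prop)
  (f : natset -> natset) (u : nat -> nat) : Prop :=
  forall A B, X A -> X B -> forall i j, e_equiv_via Gamma A B i j ->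
    exists i' j', cpair i' j' = u (cpair i j) /\
                  e_equiv_via Gamma (f A) (f B) i' j'.

Definition uniformly_e_invariant (Gamma : nat -> natset) (X : natset -> Prop)
  (f : natset -> natset) : Prop :=
  exists u, uniformity_function Gamma X f u.

(* For a computable injection h, the map C |-> h[C] is an enumeration
   equivalence via one fixed pair of indices <i, j>, independently of C; the
   inverse operator is Gamma_j = {<n, {h n}>}.  A uniformity function u sends
   <i, j> to a fixed pair <i', j'>, so f(C) = Gamma_j'(f(h[C])) for every C in
   X, and f(A) <> f(B) forces f(h[A]) <> f(h[B]).  The sets A (+) 0 and 0 (+) A
   are the images of A under n |-> 2n and n |-> 2n + 1. *)
From mathcomp Require Import all_boot zify.
Set Implicit Arguments.
Unset Strict Implicit.

Definition computes (P : prf) (h : seq nat -> nat) :=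
  forall args v, eval P args v <-> v = h args.
Definition computes_list (gs : list prf) (hs : seq (seq nat -> nat)) :=
  forall args ys, evals gs args ys <-> ys = map (fun h => h args) hs.
Definition computable1 (h : nat -> nat) :=
  exists P, computes P (fun a => h (nth 0 a 0)).

Lemma computes_zero : computes PZero (fun _ => 0).
Proof. by split=> [H|->]; [inversion H | constructor]. Qed.

Lemma computes_succ : computes PSucc (fun a => (head 0 a).+1).
Proof. by split=> [H|->]; [inversion H | constructor]. Qed.

Lemma computes_proj i : computes (PProj i) (fun a => nth 0 a i).
Proof. by split=> [H|->]; [inversion H | constructor]. Qed.

Lemma computes_nil : computes_list nil nil.
Proof. by split=> [H|->]; [inversion H | constructor]. Qed.

Lemma computes_cons g gs h hs :
  computes g h -> computes_list gs hs -> computes_list (g :: gs) (h :: hs).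
Proof.
move=> Hg Hgs args ys; split=> [H|->]; last by constructor; [apply/Hg | apply/Hgs].
inversion H; subst.
match goal with E : eval g _ _ |- _ => move/Hg: E => -> end.
by match goal with E : evals gs _ _ |- _ => move/Hgs: E => -> end.
Qed.

Lemma computes_comp f gs hf hs :
  computes f hf -> computes_list gs hs ->
  computes (PComp f gs) (fun a => hf (map (fun h => h a) hs)).
Proof.
move=> Hf Hgs args v; split=> [H|->]; last by econstructor; [apply/Hgs | apply/Hf].
inversion H; subst.
match goal with E : evals gs _ _ |- _ => move/Hgs: E => Eys end; subst.
by match goal with E : eval f _ _ |- _ => move/Hf: E end.
Qed.

Fixpoint primrec (hf hg : seq nat -> nat) (x : nat) (rest : seq nat) : nat :=
  if x is x'.+1 then hg (x' :: primrec hf hg x' rest :: rest) else hf rest.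

Lemma eval_rec f g hf hg : computes f hf -> computes g hg ->
  forall x rest v, eval (PRec f g) (x :: rest) v <-> v = primrec hf hg x rest.
Proof.
move=> Hf Hg; elim=> [|x IH] rest v; split=> [H|->].
- by inversion H; subst; apply/Hf.
- by constructor; apply/Hf.
- inversion H; subst.
  match goal with E : eval (PRec f g) _ _ |- _ => move/IH: E => Ea end; subst.
  by match goal with E : eval g _ _ |- _ => move/Hg: E end.
- by econstructor; [apply/IH | apply/Hg].
Qed.

Lemma computes_comp_rec f g hf hg g0 gs h0 hs :
  computes f hf -> computes g hg -> computes_list (g0 :: gs) (h0 :: hs) ->
  computes (PComp (PRec f g) (g0 :: gs))
    (fun a => primrec hf hg (h0 a) (map (fun h => h a) hs)).
Proof.
move=> Hf Hg Hgs args v; split=> [H|->].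
- inversion H; subst.
  match goal with E : evals _ _ _ |- _ => move/Hgs: E => Eys end; subst.
  by match goal with E : eval (PRec f g) _ _ |- _ => move/(eval_rec Hf Hg): E end.
- by econstructor; [apply/Hgs | apply/(eval_rec Hf Hg)].
Qed.

Lemma computes_ext P h h' : computes P h -> h =1 h' -> computes P h'.
Proof. by move=> H E a v; rewrite -E; apply: H. Qed.

Definition prf_add :=
  PComp (PRec (PProj 0) (PComp PSucc [:: PProj 1])) [:: PProj 0; PProj 1].

Lemma computes_add : computes prf_add (fun a => nth 0 a 0 + nth 0 a 1).
Proof.
apply: computes_ext.
  exact: computes_comp_rec (computes_proj 0)
    (computes_comp computes_succ (computes_cons (computes_proj 1) computes_nil))
    (computes_cons (computes_proj 0) (computes_cons (computes_proj 1) computes_nil)).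
by move=> a /=; elim: (nth 0 a 0) => //= x ->.
Qed.

Definition prf_pred := PComp (PRec PZero (PProj 0)) [:: PProj 0].

Lemma computes_pred : computes prf_pred (fun a => (nth 0 a 0).-1).
Proof.
apply: computes_ext.
  exact: computes_comp_rec computes_zero (computes_proj 0)
    (computes_cons (computes_proj 0) computes_nil).
by move=> a /=; case: (nth 0 a 0).
Qed.

Definition prf_sub :=
  PComp (PRec (PProj 0) (PComp prf_pred [:: PProj 1])) [:: PProj 1; PProj 0].

Lemma computes_sub : computes prf_sub (fun a => nth 0 a 0 - nth 0 a 1).
Proof.
apply: computes_ext.
  exact: computes_comp_rec (computes_proj 0)
    (computes_comp computes_pred (computes_cons (computes_proj 1) computes_nil))
    (computes_cons (computes_proj 1) (computes_cons (computes_proj 0) computes_nil)).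
by move=> a /=; elim: (nth 0 a 1) => [|x IH] /=; rewrite ?subn0 ?IH ?subnS.
Qed.

Definition prf_dist :=
  PComp prf_add [:: prf_sub; PComp prf_sub [:: PProj 1; PProj 0]].

Lemma computes_dist :
  computes prf_dist (fun a => (nth 0 a 0 - nth 0 a 1) + (nth 0 a 1 - nth 0 a 0)).
Proof.
exact: computes_comp computes_add (computes_cons computes_sub (computes_cons
  (computes_comp computes_sub (computes_cons (computes_proj 1)
     (computes_cons (computes_proj 0) computes_nil))) computes_nil)).
Qed.

Fixpoint tri s := if s is s'.+1 then tri s' + s else 0.

Definition prf_tri :=
  PComp (PRec PZero (PComp prf_add [:: PProj 1; PComp PSucc [:: PProj 0]])) [:: PProj 0].

Lemma computes_tri : computes prf_tri (fun a => tri (nth 0 a 0)).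
Proof.
apply: computes_ext.
  exact: computes_comp_rec computes_zero
    (computes_comp computes_add (computes_cons (computes_proj 1) (computes_cons
       (computes_comp computes_succ (computes_cons (computes_proj 0) computes_nil))
       computes_nil)))
    (computes_cons (computes_proj 0) computes_nil).
by move=> a /=; elim: (nth 0 a 0) => //= x ->.
Qed.

Definition prf_exp2 :=
  PComp (PRec (PComp PSucc [:: PZero]) (PComp prf_add [:: PProj 1; PProj 1])) [:: PProj 0].

Lemma computes_exp2 : computes prf_exp2 (fun a => 2 ^ nth 0 a 0).
Proof.
apply: computes_ext.
  exact: computes_comp_rec
    (computes_comp computes_succ (computes_cons computes_zero computes_nil))
    (computes_comp computes_add (computes_cons (computes_proj 1)
       (computes_cons (computes_proj 1) computes_nil)))
    (computes_cons (computes_proj 0) computes_nil).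
by move=> a /=; elim: (nth 0 a 0) => //= x ->; rewrite expnS mul2n addnn.
Qed.

Lemma tri_mul2 s : tri s * 2 = s * s.+1.
Proof. by elim: s => //= s IH; rewrite mulnDl IH; nia. Qed.

Lemma cpairE n k : cpair n k = tri (n + k) + k.
Proof. by rewrite /cpair -tri_mul2 mulnK. Qed.

Lemma tri_gap s1 s2 : s1 < s2 -> tri s1 + s1 < tri s2.
Proof.
elim: s2 => // s2 IH; rewrite ltnS leq_eqVlt => /orP[/eqP->|/IH] /=; lia.
Qed.

Lemma cpair_inj a b c d : cpair a b = cpair c d -> a = c /\ b = d.
Proof.
rewrite !cpairE => E.
by case: (ltngtP (a + b) (c + d)) => [/tri_gap|/tri_gap|Hs]; [lia | lia | rewrite Hs in E; lia].
Qed.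

Definition prf_cpair :=
  PComp prf_add [:: PComp prf_tri [:: prf_add]; PProj 1].

Lemma computes_cpair : computes prf_cpair (fun a => cpair (nth 0 a 0) (nth 0 a 1)).
Proof.
apply: computes_ext.
  exact: computes_comp computes_add (computes_cons
    (computes_comp computes_tri (computes_cons computes_add computes_nil))
    (computes_cons (computes_proj 1) computes_nil)).
by move=> a; rewrite /= cpairE.
Qed.

Lemma computable1_id : computable1 id.
Proof. by exists (PProj 0); apply: computes_proj. Qed.

Lemma computable1_double : computable1 double.
Proof.
exists (PComp prf_add [:: PProj 0; PProj 0]); apply: computes_ext.
  exact: computes_comp computes_add (computes_cons (computes_proj 0)
    (computes_cons (computes_proj 0) computes_nil)).
by move=> a /=; rewrite addnn.
Qed.

Lemma computable1_succ_double : computable1 (fun n => n.*2.+1).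
Proof.
case: computable1_double => P HP.
exists (PComp PSucc [:: P]).
exact: computes_comp computes_succ (computes_cons HP computes_nil).
Qed.

Lemma ce_exists_root F (d : nat -> nat -> nat) :
  computes F (fun a => d (nth 0 a 0) (nth 0 a 1)) -> ce (fun x => exists m, d m x = 0).
Proof.
move=> HF; exists (PMu F) => x; split=> [[m Hm]|[v Hv]].
- have exP : exists m, d m x == 0 by exists m; apply/eqP.
  case: (ex_minnP exP) => n /eqP Hn Hmin.
  exists n; apply: ev_mu => [|m' Hm']; first exact/HF.
  exists (d m' x).-1; apply/HF; rewrite /= prednK // lt0n.
  by apply/negP => /Hmin; lia.
- inversion Hv; subst.
  match goal with E : eval F _ 0 |- _ => move/HF: E => /= E end.
  by exists v.
Qed.

Lemma ce_ext S S' : ce S -> (forall x, S x <-> S' x) -> ce S'.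
Proof. by move=> [p Hp] E; exists p => n; rewrite -E; apply: Hp. Qed.

(* The operator {<g m, {h m}> | m}: 2 ^ x is the canonical index of {x}. *)
Definition graph_op (g h : nat -> nat) : natset :=
  fun y => exists m, y = cpair (g m) (2 ^ h m).

Lemma ce_graph_op g h : computable1 g -> computable1 h -> ce (graph_op g h).
Proof.
move=> [Pg Hg] [Ph Hh].
pose z m := cpair (g m) (2 ^ h m).
apply: (@ce_ext (fun x => exists m, (x - z m) + (z m - x) = 0)).
  apply: (@ce_exists_root (PComp prf_dist
    [:: PProj 1; PComp prf_cpair [:: Pg; PComp prf_exp2 [:: Ph]]])).
  exact: computes_comp computes_dist (computes_cons (computes_proj 1)
    (computes_cons (computes_comp computes_cpair (computes_cons Hg (computes_cons
       (computes_comp computes_exp2 (computes_cons Hh computes_nil)) computes_nil)))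
     computes_nil)).
by move=> x; split=> [] [m Hm]; exists m; rewrite /z in Hm *; lia.
Qed.

Lemma canon_exp2 m x : canon (2 ^ m) x <-> x = m.
Proof.
rewrite /canon; split=> [|->]; last by rewrite divnn expn_gt0.
case: (ltngtP x m) => // H.
- rewrite -(subnK (ltnW H)) expnD mulnK ?expn_gt0 // oddX.
  by have -> : (m - x == 0) = false by apply/eqP; lia.
- by rewrite divn_small // ltn_exp2l.
Qed.

Lemma enum_op_graph_op g h A n :
  enum_op (graph_op g h) A n <-> exists m, n = g m /\ A (h m).
Proof.
split=> [[k [[m /cpair_inj[-> ->]] Hk]]|[m [-> Hm]]].
  by exists m; split=> //; apply/Hk/canon_exp2.
by exists (2 ^ h m); split=> [|x /canon_exp2 ->]; first exists m.
Qed.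

Lemma enum_op_ext G A B : seteq A B -> seteq (enum_op G A) (enum_op G B).
Proof. by move=> E n; split=> [] [k [Hk H]]; exists k; split=> // x /H /E. Qed.

Lemma enum_op_extG G G' A : seteq G G' -> seteq (enum_op G A) (enum_op G' A).
Proof. by move=> E n; split=> [] [k [/E Hk H]]; exists k. Qed.

Lemma seteq_sym A B : seteq A B -> seteq B A.
Proof. by move=> E n; rewrite E. Qed.

Lemma seteq_trans A B C : seteq A B -> seteq B C -> seteq A C.
Proof. by move=> E1 E2 n; rewrite E1 E2. Qed.

Definition image (h : nat -> nat) (C : natset) : natset :=
  fun n => exists m, n = h m /\ C m.

Section UniformImage.

Variable Gamma : nat -> natset.
Hypothesis HGamma : ce_numbering Gamma.

Lemma graph_op_index g h : computable1 g -> computable1 h ->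
  exists i, forall A, seteq (enum_op (Gamma i) A) (enum_op (graph_op g h) A).
Proof.
move=> Hg Hh; case: (proj2 HGamma _ (ce_graph_op Hg Hh)) => i Hi.
by exists i => A; apply: enum_op_extG.
Qed.

Lemma image_equiv_via h : computable1 h -> injective h ->
  exists i j, forall C D, seteq D (image h C) -> e_equiv_via Gamma C D i j.
Proof.
move=> Hh h_inj.
have [i Hi] := graph_op_index Hh computable1_id.
have [j Hj] := graph_op_index computable1_id Hh.
exists i, j => C D ED; split=> n.
- by rewrite Hi enum_op_graph_op ED.
- rewrite Hj enum_op_graph_op; split=> [[m [-> /ED [m' [/h_inj -> //]]]]|Cn].
  by exists n; split=> //; apply/ED; exists n.
Qed.

End UniformImage.

Lemma oplus_empty_image C : seteq (oplus C emptyset) (image double C).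
Proof.
move=> n; rewrite /oplus; split=> [|[m [-> Cm]]]; last by rewrite odd_double doubleK.
case: ifP => // Hodd Cn; exists n./2; split=> //.
by rewrite -[n in LHS]odd_double_half Hodd.
Qed.

Lemma empty_oplus_image C : seteq (oplus emptyset C) (image (fun n => n.*2.+1) C).
Proof.
move=> n; rewrite /oplus; split=> [|[m [-> Cm]]]; last by rewrite /= odd_double uphalf_double.
case: ifP => // Hodd Cn; exists n./2; split=> //.
by rewrite -[n in LHS]odd_double_half Hodd.
Qed.

Lemma uniform_transform_neq Gamma X f (HX : closed_e Gamma X) u
  (Hu : uniformity_function Gamma X f u) (T : natset -> natset) i j
  (HT : forall C, e_equiv_via Gamma C (T C) i j)
  A B (HA : X A) (HB : X B) (Hne : ~ seteq (f A) (f B)) :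
  ~ seteq (f (T A)) (f (T B)).
Proof.
have XT C : X C -> X (T C).
  by move=> HC; apply: (HX C) => //; case: (HT C) => Hi Hj; split; [exists j | exists i].
case: (Hu A (T A) HA (XT A HA) i j (HT A)) => iA [jA [EA [_ HA2]]].
case: (Hu B (T B) HB (XT B HB) i j (HT B)) => iB [jB [EB [_ HB2]]].
rewrite -EB in EA; case: (cpair_inj EA) => _ Ej; subst jB.
move=> E; apply: Hne; apply: seteq_trans (seteq_sym HA2) _.
exact: seteq_trans (enum_op_ext _ E) HB2.
Qed.

Theorem lemma5p2 (Gamma : nat -> natset) (HGamma : ce_numbering Gamma)
  (X : natset -> Prop) (HX : closed_e Gamma X)
  (f : natset -> natset) (Hf : uniformly_e_invariant Gamma X f)
  (A B : natset) (HA : X A) (HB : X B) (Hne : ~ seteq (f A) (f B)) :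
  ~ seteq (f (oplus A emptyset)) (f (oplus B emptyset)) /\
  ~ seteq (f (oplus emptyset A)) (f (oplus emptyset B)).
Proof.
case: Hf => u Hu.
have [i1 [j1 H1]] := image_equiv_via HGamma computable1_double double_inj.
have [i2 [j2 H2]] := image_equiv_via HGamma computable1_succ_double
  (fun m n (E : m.*2.+1 = n.*2.+1) => double_inj (succn_inj E)).
split.
- apply: (uniform_transform_neq HX Hu (T := oplus^~ emptyset)) => // C.
  exact/H1/oplus_empty_image.
- apply: (uniform_transform_neq HX Hu (T := oplus emptyset)) => // C.
  exact/H2/empty_oplus_image.
Qed.
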